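(* Let $G(x,y)=g(\rho(x,y))$ be the Green's function (fundamental solution) of the Paneitz operator $P_2$ on $\mathbb{H}^3$. Then $g(\rho)>0$ for all $\rho>0$, and $g$ is strictly monotonically decreasing in the geodesic distance $\rho\in(0,\infty)$.
   Context: $\mathbb{H}^3$ is 3-dimensional hyperbolic space with geodesic distance $\rho$ and Laplace–Beltrami operator $\Delta_{\mathbb{H}}$. $P_1=-\Delta_{\mathbb{H}}-\frac34$ and $P_2=P_1(P_1+2)$. The Green's function $G=P_2^{-1}$ is the (decaying) fundamental solution of $P_2$, which depends only on $\rho(x,y)$. *)

From Stdlib Require Export Reals.
From Coquelicot Require Export Coquelicot.
Open Scope R_scope.

(* Radial part of the Laplace-Beltrami operator on H^3 (curvature -1):
   for f = f(rho), Delta_H f = f'' + 2 coth(rho) f'  (volume element 4 pi sinh^2 rho drho). *)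
Definition radial_lap (f : R -> R) : R -> R :=
  fun r => Derive_n f 2 r + 2 * (cosh r / sinh r) * Derive f r.

Definition P1 (f : R -> R) : R -> R :=
  fun r => - radial_lap f r - 3 / 4 * f r.

Definition P2 (f : R -> R) : R -> R :=
  P1 (fun r => P1 f r + 2 * f r).

(* g is the radial profile of the (decaying) Green's function G = P_2^{-1} on H^3,
   G(x,y) = g(rho(x,y)):
   - g is smooth on (0, oo) and P_2 G(x,.) = 0 away from the pole;
   - G(x,.) is locally bounded at the pole (no 1/rho singularity, as forced by
     P_2 G = delta for a 4th-order operator in dimension 3);
   - delta normalization: the flux of grad(Delta G) through the geodesic sphere
     of radius r (area 4 pi sinh^2 r) tends to 1 as r -> 0+, i.e. P_2 G = delta_x;
   - decay: G(x,.) is L^2 away from the pole (integral of g^2 * 4 pi sinh^2 over [1,oo)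
     is finite), i.e. G is the inverse of P_2 on L^2(H^3). *)
Definition is_green_P2 (g : R -> R) : Prop :=
  (forall (n : nat) (r : R), 0 < r -> ex_derive_n g n r) /\
  (forall r : R, 0 < r -> P2 g r = 0) /\
  (exists M : R, forall r : R, 0 < r <= 1 -> Rabs (g r) <= M) /\
  filterlim (fun r => 4 * PI * (sinh r) ^ 2 * Derive (radial_lap g) r)
            (at_right 0) (locally 1) /\
  ex_RInt_gen (fun r => (g r) ^ 2 * (sinh r) ^ 2) (at_point 1) (Rbar_locally p_infty).

(** Write [u = sinh r * g r].  On radial functions the operator [sinh ∘ (Δ + 1) ∘ sinh⁻¹] is
    [d²/dr²], so [sinh * P1 g = - u'' + u / 4] and [sinh * P2 g = u'''' - 5/2 u'' + 9/16 u]: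
    away from the pole [u] is a combination of [e^(3r/2)], [e^(r/2)], [e^(-r/2)], [e^(-3r/2)].
    Square integrability at infinity kills the two growing modes, boundedness of [g] at the
    pole forces [u(0+) = 0], so [u = c (e^(-r/2) - e^(-3r/2))], and the flux normalisation gives
    [c = 1 / (8 π)].  Hence [g r = 1 / (4 π (e^(3r/2) + e^(r/2)))], which is positive and
    strictly decreasing. *)

From Stdlib Require Import Reals Lra.
From Coquelicot Require Import Coquelicot.
Open Scope R_scope.

Lemma sinh_pos x : 0 < x -> 0 < sinh x.
Proof.
  intros Hx. unfold sinh.
  assert (exp (- x) < exp x) by (apply exp_increasing; lra). lra.
Qed.

Lemma locally_pos x : 0 < x -> locally x (fun y => 0 < y).
Proof. exact (open_gt 0 x). Qed.

Lemma is_derive_unique_eta f x l : is_derive f x l -> Derive (fun y => f y) x = l.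
Proof. exact (is_derive_unique f x l). Qed.

Lemma is_derive_Derive_n (g : R -> R) : (forall n r, 0 < r -> ex_derive_n g n r) ->
  forall k x, 0 < x -> is_derive (Derive_n g k) x (Derive_n g (S k) x).
Proof. intros Hg k x Hx. apply Derive_correct, (Hg (S k) x Hx). Qed.

Ltac continuous_by_derive :=
  apply (@ex_derive_continuous R_AbsRing R_NormedModule); auto_derive; easy.

Lemma not_ex_RInt_gen_eventually_ge_1 (f : R -> R) :
  (forall r, 1 <= r -> 0 <= f r) -> Rbar_locally p_infty (fun r => 1 <= f r) ->
  ~ ex_RInt_gen f (at_point 1) (Rbar_locally p_infty).
Proof.
  intros Hpos [R0 Hbig] [l Hl].
  destruct (Hl _ (locally_ball l (mkposreal 1 Rlt_0_1))) as [Q P HQ [M HM] Hprod].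
  set (R1 := Rmax 1 (R0 + 1)).
  set (b := Rmax M (R1 + Rabs l + 2) + 1).
  assert (HR1 : 1 <= R1) by apply Rmax_l.
  assert (HR0 : R0 < R1) by (pose proof (Rmax_r 1 (R0 + 1)); unfold R1; lra).
  assert (HbM : M < b) by (pose proof (Rmax_l M (R1 + Rabs l + 2)); unfold b; lra).
  assert (Hb : R1 + Rabs l + 2 < b) by (pose proof (Rmax_r M (R1 + Rabs l + 2)); unfold b; lra).
  destruct (Hprod 1 b HQ (HM b HbM)) as [y [Hy Hyl]].
  change (Rabs (y - l) < 1) in Hyl. apply Rabs_def2 in Hyl as [Hyl1 Hyl2].
  pose proof (Rabs_pos l). pose proof (Rle_abs l).
  assert (Hex : ex_RInt f 1 b) by (exists y; exact Hy).
  assert (E1 : ex_RInt f 1 R1) by (apply (ex_RInt_Chasles_1 f 1 R1 b); [lra | exact Hex]).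
  assert (E2 : ex_RInt f R1 b) by (apply (ex_RInt_Chasles_2 f 1 R1 b); [lra | exact Hex]).
  assert (Hsplit : y = RInt f 1 R1 + RInt f R1 b).
  { rewrite <- (is_RInt_unique f 1 b y Hy). symmetry. exact (RInt_Chasles f 1 R1 b E1 E2). }
  assert (I1 : 0 <= RInt f 1 R1) by (apply RInt_ge_0; [lra | exact E1 | intros; apply Hpos; lra]).
  assert (I2 : RInt (fun _ => 1) R1 b <= RInt f R1 b)
    by (apply RInt_le; [lra | apply ex_RInt_const | exact E2 | intros x Hx; apply Hbig; lra]).
  rewrite RInt_const in I2. change (scal (b - R1) 1) with ((b - R1) * 1) in I2. lra.
Qed.

Lemma is_lim_exp_mul k : 0 < k -> is_lim (fun r => exp (k * r)) p_infty p_infty.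
Proof.
  intros Hk. eapply is_lim_comp; [exact is_lim_exp_p | | exists 0; intros; discriminate].
  replace p_infty with (Rbar_mult k p_infty) at 2.
  - apply is_lim_scal_l, is_lim_id.
  - rewrite Rbar_mult_comm. apply is_Rbar_mult_unique, is_Rbar_mult_p_infty_pos. exact Hk.
Qed.

Lemma is_lim_abs_exp_mul_comp k (P : R -> R) : 0 < k -> P 0 <> 0 -> continuous P 0 ->
  is_lim (fun r => Rabs (exp (k * r) * P (exp (- r)))) p_infty p_infty.
Proof.
  intros Hk HP0 HP.
  assert (Hexp : is_lim (fun r => exp (- r)) p_infty 0).
  { eapply is_lim_comp; [exact is_lim_exp_m | exact (is_lim_opp _ _ _ (is_lim_id p_infty)) |].
    exists 0. intros; discriminate. }
  assert (Hm : is_lim (fun r => exp (k * r) * P (exp (- r))) p_infty (Rbar_mult p_infty (P 0))).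
  { apply is_lim_mult; [exact (is_lim_exp_mul k Hk) | | simpl; exact HP0].
    exact (filterlim_comp _ _ _ (fun r => exp (- r)) P _ _ _ Hexp HP). }
  apply is_lim_Rabs in Hm.
  destruct (Rlt_or_le 0 (P 0)) as [Hpos | Hneg].
  - rewrite (is_Rbar_mult_unique _ _ _ (is_Rbar_mult_p_infty_pos (P 0) Hpos)) in Hm. exact Hm.
  - assert (Hlt : Rbar_lt (P 0) 0) by (simpl; lra).
    rewrite (is_Rbar_mult_unique _ _ _ (is_Rbar_mult_p_infty_neg _ Hlt)) in Hm. exact Hm.
Qed.

Lemma filterlim_at_right_continuous (f : R -> R) x :
  continuous f x -> filterlim f (at_right x) (locally (f x)).
Proof. apply filterlim_filter_le_1, filter_le_within. Qed.

Lemma continuous_at_right_le (f h : R -> R) x : at_right x (fun r => f r <= h r) ->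
  continuous f x -> continuous h x -> f x <= h x.
Proof.
  intros Hle Hf Hh.
  exact (filterlim_le (F := at_right x) f h (f x) (h x) Hle
    (filterlim_at_right_continuous f x Hf) (filterlim_at_right_continuous h x Hh)).
Qed.

Lemma continuous_at_right_lim_unique (f h : R -> R) x l : (forall r, x < r -> f r = h r) ->
  continuous h x -> filterlim f (at_right x) (locally l) -> h x = l.
Proof.
  intros Hfh Hh Hf.
  apply (filterlim_locally_unique (F := at_right x) h).
  { exact (filterlim_at_right_continuous h x Hh). }
  apply (filterlim_ext_loc f); [| exact Hf].
  change (locally x (fun r => x < r -> f r = h r)). apply filter_forall. exact Hfh.
Qed.

(** * Conjugating the radial operators by [sinh] *)

Section DivSinh.
Variables v v1 v2 : R -> R.
Hypothesis dv : forall x, 0 < x -> is_derive v x (v1 x).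
Hypothesis dv1 : forall x, 0 < x -> is_derive v1 x (v2 x).

Lemma is_derive_div_sinh x : 0 < x ->
  is_derive (fun y => v y / sinh y) x ((v1 x * sinh x - v x * cosh x) / sinh x ^ 2).
Proof.
  intros Hx. pose proof (sinh_pos x Hx). auto_derive.
  - split; [eexists; apply dv; exact Hx | split; [lra | easy]].
  - rewrite (is_derive_unique_eta _ _ _ (dv x Hx)). field. lra.
Qed.

Lemma Derive_div_sinh x : 0 < x ->
  Derive (fun y => v y / sinh y) x = (v1 x * sinh x - v x * cosh x) / sinh x ^ 2.
Proof. intros Hx. exact (is_derive_unique _ _ _ (is_derive_div_sinh x Hx)). Qed.

Lemma radial_lap_div_sinh r : 0 < r ->
  radial_lap (fun y => v y / sinh y) r = (v2 r - v r) / sinh r.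
Proof.
  intros Hr. pose proof (sinh_pos r Hr). unfold radial_lap. simpl.
  rewrite (Derive_ext_loc _ (fun y => (v1 y * sinh y - v y * cosh y) / sinh y ^ 2)).
  2:{ apply (filter_imp (fun y => 0 < y)); [|exact (locally_pos r Hr)].
      intros y Hy. exact (Derive_div_sinh y Hy). }
  rewrite Derive_div_sinh by exact Hr.
  assert (H2 : is_derive (fun y => (v1 y * sinh y - v y * cosh y) / sinh y ^ 2) r
    ((v2 r - v r) / sinh r
     - 2 * (cosh r / sinh r) * ((v1 r * sinh r - v r * cosh r) / sinh r ^ 2))).
  { auto_derive.
    - repeat split; try (eexists; (apply dv || apply dv1); exact Hr).
      apply Rgt_not_eq; nra.
    - rewrite (is_derive_unique_eta _ _ _ (dv r Hr)), (is_derive_unique_eta _ _ _ (dv1 r Hr)).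
      (* The identity needs [cosh^2 - sinh^2 = 1], which [field] sees once [exp (- r) = / exp r]. *)
      unfold sinh, cosh in *. rewrite exp_Ropp in *.
      pose proof (exp_pos r). set (E := exp r) in *.
      assert (E * E - 1 <> 0).
      { replace (E * E - 1) with (E * (E - / E)) by (field; lra).
        apply Rmult_integral_contrapositive. split; lra. }
      field. repeat split; lra. }
  erewrite is_derive_unique by exact H2. ring.
Qed.
End DivSinh.

Lemma P1_div_sinh v v1 v2 r :
  (forall x, 0 < x -> is_derive v x (v1 x)) -> (forall x, 0 < x -> is_derive v1 x (v2 x)) ->
  0 < r -> P1 (fun y => v y / sinh y) r = (v r / 4 - v2 r) / sinh r.
Proof.
  intros dv dv1 Hr. unfold P1. rewrite (radial_lap_div_sinh v v1 v2) by assumption.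
  pose proof (sinh_pos r Hr). field. lra.
Qed.

Lemma radial_lap_ext_pos f1 f2 r : (forall x, 0 < x -> f1 x = f2 x) -> 0 < r ->
  radial_lap f1 r = radial_lap f2 r.
Proof.
  intros Hf Hr.
  assert (Hloc : locally r (fun x => f1 x = f2 x)) by exact (filter_imp _ _ Hf (locally_pos r Hr)).
  unfold radial_lap. rewrite (Derive_n_ext_loc f1 f2 2 r Hloc), (Derive_ext_loc f1 f2 r Hloc).
  reflexivity.
Qed.

Lemma P1_ext_pos f1 f2 r : (forall x, 0 < x -> f1 x = f2 x) -> 0 < r -> P1 f1 r = P1 f2 r.
Proof.
  intros Hf Hr. unfold P1. rewrite (radial_lap_ext_pos f1 f2), Hf by assumption. reflexivity.
Qed.

Section SinhMul.
Variables g0 g1 g2 g3 g4 : R -> R.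
Hypothesis dg0 : forall x, 0 < x -> is_derive g0 x (g1 x).
Hypothesis dg1 : forall x, 0 < x -> is_derive g1 x (g2 x).
Hypothesis dg2 : forall x, 0 < x -> is_derive g2 x (g3 x).
Hypothesis dg3 : forall x, 0 < x -> is_derive g3 x (g4 x).

(* Leibniz' rule for the successive derivatives of [u0 = sinh * g0]. *)
Definition u0 x := sinh x * g0 x.
Definition u1 x := cosh x * g0 x + sinh x * g1 x.
Definition u2 x := sinh x * g0 x + 2 * cosh x * g1 x + sinh x * g2 x.
Definition u3 x := cosh x * g0 x + 3 * sinh x * g1 x + 3 * cosh x * g2 x + sinh x * g3 x.
Definition u4 x :=
  sinh x * g0 x + 4 * cosh x * g1 x + 6 * sinh x * g2 x + 4 * cosh x * g3 x + sinh x * g4 x.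

Ltac leibniz_step :=
  intros x Hx; auto_derive;
  [ repeat split; eexists; eauto
  | rewrite ?(is_derive_unique_eta _ _ _ (dg0 x Hx)), ?(is_derive_unique_eta _ _ _ (dg1 x Hx)),
      ?(is_derive_unique_eta _ _ _ (dg2 x Hx)), ?(is_derive_unique_eta _ _ _ (dg3 x Hx)); ring ].

Lemma is_derive_u0 : forall x, 0 < x -> is_derive u0 x (u1 x).
Proof. unfold u0, u1. leibniz_step. Qed.

Lemma is_derive_u1 : forall x, 0 < x -> is_derive u1 x (u2 x).
Proof. unfold u1, u2. leibniz_step. Qed.

Lemma is_derive_u2 : forall x, 0 < x -> is_derive u2 x (u3 x).
Proof. unfold u2, u3. leibniz_step. Qed.

Lemma is_derive_u3 : forall x, 0 < x -> is_derive u3 x (u4 x).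
Proof. unfold u3, u4. leibniz_step. Qed.

Lemma eq_u0_div_sinh x : 0 < x -> g0 x = u0 x / sinh x.
Proof. intros Hx. pose proof (sinh_pos x Hx). unfold u0. field. lra. Qed.

Lemma sinh_mul_P2 r : 0 < r -> sinh r * P2 g0 r = u4 r - 5/2 * u2 r + 9/16 * u0 r.
Proof.
  intros Hr.
  assert (Hh : forall x, 0 < x -> P1 g0 x + 2 * g0 x = (9/4 * u0 x - u2 x) / sinh x).
  { intros x Hx. pose proof (sinh_pos x Hx).
    rewrite (P1_ext_pos _ _ x eq_u0_div_sinh Hx), (P1_div_sinh u0 u1 u2), eq_u0_div_sinh
      by (exact is_derive_u0 || exact is_derive_u1 || exact Hx).
    field. lra. }
  unfold P2. rewrite (P1_ext_pos _ _ r Hh Hr).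
  rewrite (P1_div_sinh (fun x => 9/4 * u0 x - u2 x) (fun x => 9/4 * u1 x - u3 x)
    (fun x => 9/4 * u2 x - u4 x)); try exact Hr.
  - pose proof (sinh_pos r Hr). field. lra.
  - intros x Hx. apply (is_derive_minus (fun y => 9/4 * u0 y)).
    + apply is_derive_scal, is_derive_u0, Hx.
    + apply is_derive_u2, Hx.
  - intros x Hx. apply (is_derive_minus (fun y => 9/4 * u1 y)).
    + apply is_derive_scal, is_derive_u1, Hx.
    + apply is_derive_u3, Hx.
Qed.

Lemma Derive_radial_lap r : 0 < r ->
  Derive (radial_lap g0) r = ((u3 r - u1 r) * sinh r - (u2 r - u0 r) * cosh r) / sinh r ^ 2.
Proof.
  intros Hr.
  rewrite (Derive_ext_loc _ (fun y => (u2 y - u0 y) / sinh y)).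
  - apply (Derive_div_sinh (fun y => u2 y - u0 y) (fun y => u3 y - u1 y)); [|exact Hr].
    intros x Hx. apply (is_derive_minus u2 u0); [apply is_derive_u2 | apply is_derive_u0]; exact Hx.
  - apply (filter_imp (fun y => 0 < y)); [|exact (locally_pos r Hr)]. intros y Hy.
    rewrite (radial_lap_ext_pos _ _ y eq_u0_div_sinh Hy).
    apply (radial_lap_div_sinh u0 u1 u2); [exact is_derive_u0 | exact is_derive_u1 | exact Hy].
Qed.
End SinhMul.

Lemma sinh_mul_green_ode (g : R -> R) :
  (forall n r, 0 < r -> ex_derive_n g n r) -> (forall r, 0 < r -> P2 g r = 0) ->
  let G := Derive_n g in forall x, 0 < x ->
  u4 (G 0%nat) (G 1%nat) (G 2%nat) (G 3%nat) (G 4%nat) x =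
    5/2 * u2 (G 0%nat) (G 1%nat) (G 2%nat) x - 9/16 * u0 (G 0%nat) x.
Proof.
  intros Hsmooth HP2 G x Hx. pose proof (is_derive_Derive_n g Hsmooth) as dG.
  pose proof (sinh_mul_P2 _ _ _ _ _ (dG 0%nat) (dG 1%nat) (dG 2%nat) (dG 3%nat) x Hx) as HP.
  change (P2 (Derive_n g 0)) with (P2 g) in HP. rewrite HP2, Rmult_0_r in HP by exact Hx.
  unfold G. lra.
Qed.

(** * The fourth order equation [u'''' - 5/2 u'' + 9/16 u = 0] *)

Section FirstIntegrals.
Variables s p : R.
Variables y0 y1 y2 y3 y4 : R -> R.
Hypothesis dy0 : forall x, 0 < x -> is_derive y0 x (y1 x).
Hypothesis dy1 : forall x, 0 < x -> is_derive y1 x (y2 x).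
Hypothesis dy2 : forall x, 0 < x -> is_derive y2 x (y3 x).
Hypothesis dy3 : forall x, 0 < x -> is_derive y3 x (y4 x).
Hypothesis ode : forall x, 0 < x -> y4 x = s * y2 x - p * y0 x.

(* If [l] is a root of [X^4 - s X^2 + p], then [(D - l) (D^3 + l D^2 + (l^2 - s) D + l^3 - s l)]
   is the operator [D^4 - s D^2 + p] of the equation. *)
Definition first_integral l x :=
  exp (- (l * x)) * (y3 x + l * y2 x + (l ^ 2 - s) * y1 x + (l ^ 3 - s * l) * y0 x).

Section Root.
Variable l : R.
Hypothesis root_l : l ^ 4 - s * l ^ 2 + p = 0.

Lemma is_derive_first_integral x : 0 < x -> is_derive (first_integral l) x 0.
Proof.
  intros Hx. unfold first_integral. auto_derive.
  - repeat split; eexists; eauto.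
  - rewrite (is_derive_unique_eta _ _ _ (dy0 x Hx)), (is_derive_unique_eta _ _ _ (dy1 x Hx)),
      (is_derive_unique_eta _ _ _ (dy2 x Hx)), (is_derive_unique_eta _ _ _ (dy3 x Hx)), ode
      by exact Hx.
    replace p with (s * l ^ 2 - l ^ 4) by lra. ring.
Qed.

Lemma first_integral_const r : 0 < r -> first_integral l r = first_integral l 1.
Proof.
  intros Hr. assert (Hmin : 0 < Rmin 1 r) by (apply Rmin_glb_lt; lra).
  destruct (MVT_gen (first_integral l) 1 r (fun _ => 0)) as [c [_ Hc]].
  - intros x Hx. apply is_derive_first_integral. lra.
  - intros x Hx. apply continuity_pt_filterlim, (@ex_derive_continuous R_AbsRing R_NormedModule).
    eexists. apply is_derive_first_integral. lra.
  - lra.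
Qed.

Lemma first_integral_eq r : 0 < r ->
  y3 r + l * y2 r + (l ^ 2 - s) * y1 r + (l ^ 3 - s * l) * y0 r = first_integral l 1 * exp (l * r).
Proof.
  intros Hr. rewrite <- (first_integral_const r Hr). unfold first_integral.
  rewrite exp_Ropp. pose proof (exp_pos (l * r)). field. lra.
Qed.
End Root.
End FirstIntegrals.

Definition exp_modes a b c d r :=
  a * exp (3/2 * r) + b * exp (1/2 * r) + c * exp (-1/2 * r) + d * exp (-3/2 * r).

Lemma exp_modes_repr (y0 y1 y2 y3 y4 : R -> R) :
  (forall x, 0 < x -> is_derive y0 x (y1 x)) -> (forall x, 0 < x -> is_derive y1 x (y2 x)) ->
  (forall x, 0 < x -> is_derive y2 x (y3 x)) -> (forall x, 0 < x -> is_derive y3 x (y4 x)) ->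
  (forall x, 0 < x -> y4 x = 5/2 * y2 x - 9/16 * y0 x) ->
  exists a b c d, forall r, 0 < r ->
    y0 r = exp_modes a b c d r /\
    y1 r = exp_modes (3/2 * a) (1/2 * b) (-1/2 * c) (-3/2 * d) r /\
    y2 r = exp_modes (9/4 * a) (1/4 * b) (1/4 * c) (9/4 * d) r /\
    y3 r = exp_modes (27/8 * a) (1/8 * b) (-1/8 * c) (-27/8 * d) r.
Proof.
  intros dy0 dy1 dy2 dy3 ode.
  set (K l := first_integral (5/2) y0 y1 y2 y3 l 1).
  (* Inverse of the Vandermonde system given by the roots [3/2, 1/2, -1/2, -3/2]. *)
  exists (K (3/2) / 6), (- K (1/2) / 2), (K (-1/2) / 2), (- K (-3/2) / 6).
  intros r Hr. unfold exp_modes.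
  pose proof (first_integral_eq _ _ _ _ _ _ _ dy0 dy1 dy2 dy3 ode (3/2) ltac:(field) r Hr).
  pose proof (first_integral_eq _ _ _ _ _ _ _ dy0 dy1 dy2 dy3 ode (1/2) ltac:(field) r Hr).
  pose proof (first_integral_eq _ _ _ _ _ _ _ dy0 dy1 dy2 dy3 ode (-1/2) ltac:(field) r Hr).
  pose proof (first_integral_eq _ _ _ _ _ _ _ dy0 dy1 dy2 dy3 ode (-3/2) ltac:(field) r Hr).
  fold (K (3/2)) (K (1/2)) (K (-1/2)) (K (-3/2)) in *.
  cbn [pow] in *. repeat split; lra.
Qed.

(** * The boundary conditions *)

Lemma exp_modes_factor a b c d r :
  exp_modes a b c d r = exp (3/2 * r) * (a + exp (- r) * (b + exp (- r) * (c + exp (- r) * d))) /\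
  exp_modes 0 b c d r = exp (1/2 * r) * (b + exp (- r) * (c + exp (- r) * d)).
Proof.
  assert (Hshift : forall q, exp (q * r) * exp (- r) = exp ((q - 1) * r))
    by (intros q; rewrite <- exp_plus; f_equal; ring).
  assert (E3 : exp (3/2 * r) * exp (- r) = exp (1/2 * r)) by (rewrite Hshift; f_equal; field).
  assert (E1 : exp (1/2 * r) * exp (- r) = exp (-1/2 * r)) by (rewrite Hshift; f_equal; field).
  assert (Em1 : exp (-1/2 * r) * exp (- r) = exp (-3/2 * r)) by (rewrite Hshift; f_equal; field).
  unfold exp_modes. split.
  - rewrite <- Em1, <- E1, <- E3. ring.
  - rewrite <- Em1, <- E1. ring.
Qed.

Lemma exp_modes_abs_lim a b c d : a <> 0 \/ b <> 0 ->
  is_lim (fun r => Rabs (exp_modes a b c d r)) p_infty p_infty.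
Proof.
  intros Hab. destruct (Req_dec a 0) as [-> | Ha].
  - apply (is_lim_ext (fun r => Rabs (exp (1/2 * r) * (fun e => b + e * (c + e * d)) (exp (- r))))).
    { intros r. rewrite (proj2 (exp_modes_factor 0 b c d r)). reflexivity. }
    apply (is_lim_abs_exp_mul_comp _ (fun e => b + e * (c + e * d)));
      [lra | cbv beta; lra | continuous_by_derive].
  - apply (is_lim_ext
      (fun r => Rabs (exp (3/2 * r) * (fun e => a + e * (b + e * (c + e * d))) (exp (- r))))).
    { intros r. rewrite (proj1 (exp_modes_factor a b c d r)). reflexivity. }
    apply (is_lim_abs_exp_mul_comp _ (fun e => a + e * (b + e * (c + e * d))));
      [lra | cbv beta; lra | continuous_by_derive].
Qed.

Lemma exp_modes_L2 (f : R -> R) a b c d :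
  (forall r, 0 < r -> f r = exp_modes a b c d r ^ 2) ->
  ex_RInt_gen f (at_point 1) (Rbar_locally p_infty) -> a = 0 /\ b = 0.
Proof.
  intros Hf Hint.
  assert (Hlead : ~ (a <> 0 \/ b <> 0)).
  { intros Hab. apply (not_ex_RInt_gen_eventually_ge_1 f); [| | exact Hint].
    - intros r Hr. rewrite Hf by lra. apply pow2_ge_0.
    - destruct (exp_modes_abs_lim a b c d Hab (fun y => 1 < y)) as [M HM]; [exists 1; tauto |].
      exists (Rmax 0 M). intros r Hr.
      pose proof (Rmax_l 0 M). pose proof (Rmax_r 0 M).
      rewrite Hf, <- pow2_abs by lra. specialize (HM r ltac:(lra)). simpl in HM. nra. }
  destruct (Req_dec a 0), (Req_dec b 0); tauto.
Qed.

Lemma exp_modes_bounded_at_0 c d M :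
  (forall r, 0 < r <= 1 -> Rabs (exp_modes 0 0 c d r) <= M * sinh r) -> d = - c.
Proof.
  intros Hb.
  assert (Hle : Rabs (exp_modes 0 0 c d 0) <= M * sinh 0).
  { apply (continuous_at_right_le (fun r => Rabs (exp_modes 0 0 c d r)) (fun r => M * sinh r)).
    - exists (mkposreal 1 Rlt_0_1). intros r Hr Hpos. apply Hb.
      change (Rabs (r - 0) < 1) in Hr. apply Rabs_def2 in Hr. lra.
    - apply continuous_Rabs_comp. unfold exp_modes. continuous_by_derive.
    - continuous_by_derive. }
  assert (E0 : exp_modes 0 0 c d 0 = c + d) by (unfold exp_modes; rewrite !Rmult_0_r, exp_0; ring).
  rewrite E0, sinh_0, Rmult_0_r in Hle.
  assert (c + d = 0) by (apply Rabs_eq_0; pose proof (Rabs_pos (c + d)); lra). lra.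
Qed.

(* The right-hand side is [4 π ((u''' - u') sinh - (u'' - u) cosh)] for
   [u = exp_modes 0 0 c (- c)]; it tends to [8 π c] at [0]. *)
Lemma flux_coeff (flux : R -> R) c :
  (forall r, 0 < r -> flux r = 4 * PI *
     (exp_modes 0 0 (3/8 * c) (15/8 * c) r * sinh r
      + exp_modes 0 0 (3/4 * c) (5/4 * c) r * cosh r)) ->
  filterlim flux (at_right 0) (locally 1) -> c = / (8 * PI).
Proof.
  intros Hflux Hlim.
  pose proof (continuous_at_right_lim_unique flux _ 0 1 Hflux) as H0. cbv beta in H0.
  unfold exp_modes in H0. rewrite !Rmult_0_r, exp_0, sinh_0, cosh_0 in H0.
  specialize (H0 ltac:(continuous_by_derive) Hlim).
  pose proof PI_RGT_0. field_simplify_eq; lra.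
Qed.

Definition green_profile r := / (4 * PI * (exp (3/2 * r) + exp (1/2 * r))).

Lemma eq_green_profile (g : R -> R) r : 0 < r ->
  sinh r * g r = exp_modes 0 0 (/ (8 * PI)) (- / (8 * PI)) r -> g r = green_profile r.
Proof.
  intros Hr Hg. pose proof (sinh_pos r Hr). pose proof PI_RGT_0.
  assert (g r = exp_modes 0 0 (/ (8 * PI)) (- / (8 * PI)) r / sinh r) as ->
    by (rewrite <- Hg; field; lra).
  unfold exp_modes, green_profile, sinh.
  set (t := exp (1/2 * r)).
  assert (Ht : 1 < t) by (rewrite <- exp_0; apply exp_increasing; lra).
  assert (E1 : exp r = t * t) by (unfold t; rewrite <- exp_plus; f_equal; field).
  assert (E3 : exp (3/2 * r) = t * t * t)
    by (rewrite <- E1; unfold t; rewrite <- exp_plus; f_equal; field).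
  assert (Em1 : exp (-1/2 * r) = / t) by (unfold t; rewrite <- exp_Ropp; f_equal; field).
  assert (Em3 : exp (-3/2 * r) = / (t * t * t)) by (rewrite <- E3, <- exp_Ropp; f_equal; field).
  rewrite exp_Ropp, E1, E3, Em1, Em3.
  assert (1 < t * t) by nra.
  field. repeat split; nra.
Qed.

Lemma green_profile_pos r : 0 < green_profile r.
Proof.
  unfold green_profile. pose proof PI_RGT_0.
  pose proof (exp_pos (3/2 * r)). pose proof (exp_pos (1/2 * r)).
  apply Rinv_0_lt_compat. nra.
Qed.

Lemma green_profile_decreasing r1 r2 : r1 < r2 -> green_profile r2 < green_profile r1.
Proof.
  intros Hr. unfold green_profile. pose proof PI_RGT_0.
  pose proof (exp_pos (3/2 * r1)). pose proof (exp_pos (1/2 * r1)).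
  assert (exp (3/2 * r1) < exp (3/2 * r2)) by (apply exp_increasing; lra).
  assert (exp (1/2 * r1) < exp (1/2 * r2)) by (apply exp_increasing; lra).
  apply Rinv_lt_contravar; [apply Rmult_lt_0_compat | apply Rmult_lt_compat_l]; nra.
Qed.

Theorem mainTheorem4 (g : R -> R) :
  is_green_P2 g ->
  (forall r : R, 0 < r -> 0 < g r) /\
  (forall r1 r2 : R, 0 < r1 -> r1 < r2 -> g r2 < g r1).
Proof.
  intros [Hsmooth [HP2 [[M Hbound] [Hflux HL2]]]].
  pose proof (is_derive_Derive_n g Hsmooth) as dG.
  destruct (exp_modes_repr _ _ _ _ _ (is_derive_u0 _ _ (dG 0%nat))
    (is_derive_u1 _ _ _ (dG 0%nat) (dG 1%nat))
    (is_derive_u2 _ _ _ _ (dG 0%nat) (dG 1%nat) (dG 2%nat))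
    (is_derive_u3 _ _ _ _ _ (dG 0%nat) (dG 1%nat) (dG 2%nat) (dG 3%nat))
    (sinh_mul_green_ode g Hsmooth HP2)) as [a [b [c [d Hmodes]]]].
  assert (Hu : forall r, 0 < r -> sinh r * g r = exp_modes a b c d r) by apply Hmodes.
  destruct (exp_modes_L2 (fun r => g r ^ 2 * sinh r ^ 2) a b c d) as [-> ->]; [| exact HL2 |].
  { intros r Hr. rewrite <- Hu by exact Hr. ring. }
  assert (Hd : d = - c).
  { apply (exp_modes_bounded_at_0 c d M). intros r Hr. pose proof (sinh_pos r (proj1 Hr)).
    rewrite <- Hu, Rabs_mult, Rabs_pos_eq, Rmult_comm by lra.
    apply Rmult_le_compat_r; [lra | exact (Hbound r Hr)]. }
  subst d.
  assert (Hc : c = / (8 * PI)).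
  { refine (flux_coeff _ c _ Hflux). intros r Hr.
    change (radial_lap g) with (radial_lap (Derive_n g 0)).
    rewrite (Derive_radial_lap _ _ _ _ (dG 0%nat) (dG 1%nat) (dG 2%nat) r Hr).
    destruct (Hmodes r Hr) as [-> [-> [-> ->]]].
    unfold exp_modes. pose proof (sinh_pos r Hr). field. lra. }
  subst c.
  assert (Hg : forall r, 0 < r -> g r = green_profile r)
    by (intros r Hr; apply eq_green_profile, Hu; exact Hr).
  split.
  - intros r Hr. rewrite Hg by exact Hr. apply green_profile_pos.
  - intros r1 r2 Hr1 Hr12. rewrite !Hg by lra. apply green_profile_decreasing, Hr12.
Qed.
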